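(* Let $\pi,\pi'$ be vertices of a Rauzy class $\mathcal{R}$ on the alphabet $\mathcal{A}$. Let $G\subseteq\mathrm{Sp}(\Omega_\pi,\mathbb{Z})$ be the subgroup generated by the symplectic transvections $\{T_{e_\alpha}\}_{\alpha\in\mathcal{A}}$ with respect to $\Omega_\pi$, and $G'\subseteq\mathrm{Sp}(\Omega_{\pi'},\mathbb{Z})$ the subgroup generated by $\{T'_{e_\alpha}\}_{\alpha\in\mathcal{A}}$ with respect to $\Omega_{\pi'}$. If $\gamma$ is any walk (using arrows of $\mathcal{R}$ and their reverses) from $\pi$ to $\pi'$, then the isomorphism $\mathrm{Sp}(\Omega_\pi,\mathbb{Z})\to\mathrm{Sp}(\Omega_{\pi'},\mathbb{Z})$, $S\mapsto B_\gamma SB_\gamma^{-1}$, restricts to an isomorphism between $G$ and $G'$.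
   Context: Permutations $\pi=(\pi_{\mathrm t},\pi_{\mathrm b})$ are pairs of bijections $\mathcal{A}\to\{1,\dots,d\}$, $d=|\mathcal{A}|\ge3$, assumed irreducible and nondegenerate; $\alpha_{\varepsilon,j}=\pi_\varepsilon^{-1}(j)$. Rauzy induction: the top operation, with $\alpha_{\mathrm b,k}=\alpha_{\mathrm t,d}$, replaces the bottom row by $\alpha_{\mathrm b,1},\dots,\alpha_{\mathrm b,k},\alpha_{\mathrm b,d},\alpha_{\mathrm b,k+1},\dots,\alpha_{\mathrm b,d-1}$ (winner $\alpha_{\mathrm t,d}$, loser $\alpha_{\mathrm b,d}$); the bottom operation, with $\alpha_{\mathrm t,k}=\alpha_{\mathrm b,d}$, replaces the top row by $\alpha_{\mathrm t,1},\dots,\alpha_{\mathrm t,k},\alpha_{\mathrm t,d},\alpha_{\mathrm t,k+1},\dots,\alpha_{\mathrm t,d-1}$ (winner $\alpha_{\mathrm b,d}$, loser $\alpha_{\mathrm t,d}$). A Rauzy class is a connected component of the directed graph with arrows $\pi\to R_{\mathrm t}(\pi),\pi\to R_{\mathrm b}(\pi)$. $(\Omega_\pi)_{\alpha\beta}=+1$ if $\pi_{\mathrm t}(\alpha)<\pi_{\mathrm t}(\beta)$ and $\pi_{\mathrm b}(\alpha)>\pi_{\mathrm b}(\beta)$, $-1$ if the reverse inequalities hold, $0$ otherwise. For an arrow with winner $\alpha_{\mathrm w}$, loser $\alpha_{\mathrm l}$, $B_\gamma=\mathrm{Id}+E_{\alpha_{\mathrm l}\alpha_{\mathrm w}}$,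 $B_{\gamma^{-1}}=B_\gamma^{-1}$, $B_{\gamma_1\cdots\gamma_n}=B_{\gamma_n}\cdots B_{\gamma_1}$; for a walk from $\pi$ to $\pi'$, $\Omega_{\pi'}=B_\gamma\Omega_\pi B_\gamma^{\intercal}$. $\mathrm{Sp}(\Omega,\mathbb{Z})=\{S\in\mathrm{GL}(\mathbb{Z}^{\mathcal{A}}):S\Omega S^{\intercal}=\Omega\}$ acting on row vectors. With $\langle u,v\rangle=u\Omega v^{\intercal}$, the symplectic transvection along $v$ is $T_v(u)=u+\langle v,u\rangle v$; $e_\alpha$ are the canonical basis vectors. *)

From HB Require Import structures.
From mathcomp Require Import all_boot all_order all_algebra.
Set Implicit Arguments. Unset Strict Implicit. Unset Printing Implicit Defensive.
Import GRing.Theory.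
Local Open Scope ring_scope.

(* A permutation pi = (pi_t, pi_b) on the alphabet A is
   represented by its two rows: the top row [alpha_{t,1}; ...; alpha_{t,d}]
   and the bottom row [alpha_{b,1}; ...; alpha_{b,d}], each an ordering of A.
   Vectors in Z^A are row vectors 'rV[int]_#|A| indexed through enum_rank. *)

Section Rauzy.
Variable A : finType.

Definition perm_pair := (seq A * seq A)%type.

(* pi_eps(a) : 1-based position of a in the row s *)
Definition pos (s : seq A) (a : A) : nat := (index a s).+1.

Definition valid (p : perm_pair) : bool :=
  perm_eq p.1 (enum A) && perm_eq p.2 (enum A).

Definition rirreducible (p : perm_pair) : bool :=
  [forall k : 'I_#|A|, (0 < k)%N ==> ~~ perm_eq (take k p.1) (take k p.2)].

Definition rvertex (p : perm_pair) : bool := valid p && rirreducible p.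

(* monodromy  m(j) = pi_b(alpha_{t,j})  and its inverse  m^-1(i) = pi_t(alpha_{b,i}) *)
Definition mono (p : perm_pair) (j : nat) : nat :=
  nth 0%N [seq pos p.2 a | a <- p.1] j.-1.
Definition monoinv (p : perm_pair) (i : nat) : nat :=
  nth 0%N [seq pos p.1 a | a <- p.2] i.-1.

(* Veech's permutation sigma on {0,...,d}, whose cycles are the singularities
   of the suspension; a cycle c carries cone angle
   2 pi (|c| - [0 in c] - [d in c]). *)
Definition vsigma (p : perm_pair) (j : nat) : nat :=
  if j == 0%N then (monoinv p 1).-1
  else if j == monoinv p #|A| then #|A|
  else (monoinv p (mono p j).+1).-1.

Definition vsigma_ord (p : perm_pair) (j : 'I_#|A|.+1) : 'I_#|A|.+1 :=
  inord (vsigma p j).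

(* rnondegenerate: no singularity of cone angle 2 pi (no marked point) *)
Definition rnondegenerate (p : perm_pair) : bool :=
  [forall j : 'I_#|A|.+1,
    (order (vsigma_ord p) j - fconnect (vsigma_ord p) j ord0
       - fconnect (vsigma_ord p) j ord_max != 1)%N].

Inductive kind := Top | Bot.

(* modify the row [los]: the winner is the last letter of [win], the loser
   the last letter of [los]; with w = alpha_{los,k} the new row is
   alpha_{los,1..k}, loser, alpha_{los,k+1..d-1}. *)
Definition rauzy_row (win los : seq A) : seq A :=
  match win, los with
  | x :: xs, y :: ys =>
      let w := last x xs in let l := last y ys in let b := belast y ys in
      let k := pos los w in take k b ++ l :: drop k b
  | _, _ => los
  end.

Definition rauzy (k : kind) (p : perm_pair) : perm_pair :=
  match k with
  | Top => (p.1, rauzy_row p.1 p.2)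
  | Bot => (rauzy_row p.2 p.1, p.2)
  end.

Definition winner_loser (k : kind) (p : perm_pair) : option (A * A) :=
  match p.1, p.2 with
  | x :: xs, y :: ys =>
      match k with
      | Top => Some (last x xs, last y ys)
      | Bot => Some (last y ys, last x xs)
      end
  | _, _ => None
  end.

Local Notation n := #|A|.

Definition Emx (a b : A) : 'M[int]_n := delta_mx (enum_rank a) (enum_rank b).

Definition Bmx (k : kind) (p : perm_pair) : 'M[int]_n :=
  match winner_loser k p with
  | Some (w, l) => 1%:M + Emx l w
  | None => 1%:M
  end.

Definition Omega (p : perm_pair) : 'M[int]_n :=
  \matrix_(i, j)
    let a := enum_val i in let b := enum_val j in
    if (pos p.1 a < pos p.1 b)%N && (pos p.2 a > pos p.2 b)%N then 1
    else if (pos p.1 a > pos p.1 b)%N && (pos p.2 a < pos p.2 b)%N then -1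
    else 0.

(* walk B p q M : M = B_gamma for some walk gamma from p to q in the Rauzy
   graph (vertices: valid rirreducible permutations), using arrows and their
   reverses; B_{gamma_1 ... gamma_m} = B_{gamma_m} ... B_{gamma_1}. *)
Inductive walk : perm_pair -> perm_pair -> 'M[int]_n -> Prop :=
| walk_nil p : walk p p 1%:M
| walk_fwd k p q M : rvertex p -> rvertex (rauzy k p) ->
    walk (rauzy k p) q M -> walk p q (M *m Bmx k p)
| walk_bwd k p q M : rvertex p -> rvertex (rauzy k p) ->
    walk p q M -> walk (rauzy k p) q (M *m invmx (Bmx k p)).

Definition evec (a : A) : 'rV[int]_n := delta_mx 0 (enum_rank a).

End Rauzy.

(* symplectic transvection along v w.r.t. Om, as a matrix acting on row
   vectors:  u *m transvection Om v = u + (v Om u^T) v *)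
Definition transvection (n : nat) (Om : 'M[int]_n) (v : 'rV[int]_n) : 'M[int]_n :=
  1%:M + Om^T *m v^T *m v.

Inductive gen_group (n : nat) (X : 'M[int]_n -> Prop) : 'M[int]_n -> Prop :=
| gg_one : gen_group X 1%:M
| gg_gen S : X S -> gen_group X S
| gg_mul S T : gen_group X S -> gen_group X T -> gen_group X (S *m T)
| gg_inv S : gen_group X S -> gen_group X (invmx S).

Definition Gtrans (A : finType) (p : perm_pair A) : 'M[int]_#|A| -> Prop :=
  gen_group (fun S => exists a : A, S = transvection (Omega p) (evec a)).

(* If B Om B^T = Om', conjugation by B maps the transvection T_v of Om to the
   transvection T'_{v B^-1} of Om'.  Along an arrow of a Rauzy class,
   B = 1 + E_{lw} with l <> w (by irreducibility), Omega' = B Omega B^T and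
   <e_w, e_l> = +-1.  So conjugation by B sends T_{e_a} to T'_{e_a} for a <> l,
   and T_{e_l} to T'_{e_l - e_w}; as e_l - e_w is the image of e_l under
   T'_{e_w}^{+-1}, the latter is a conjugate of T'_{e_l} inside G'.  The same
   argument for B^-1 = 1 - E_{lw} gives the reverse inclusion, and these
   isomorphisms compose along the walk. *)

From HB Require Import structures.
From mathcomp Require Import all_boot all_order all_algebra.
From mathcomp Require Import zify.
Set Implicit Arguments. Unset Strict Implicit. Unset Printing Implicit Defensive.
Import GRing.Theory Num.Theory.
Local Open Scope ring_scope.

Section Conjugation.
Variable n : nat.
Implicit Types (M N S : 'M[int]_n) (X Y Z : 'M[int]_n -> Prop).

Lemma invmx_uniq M N : M *m N = 1%:M -> invmx M = N.
Proof.
move=> MN; have [uM _] := mulmx1_unit MN.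
by rewrite -[invmx M]mulmx1 -MN mulmxA mulVmx // mul1mx.
Qed.

Lemma invmxM M N : M \in unitmx -> N \in unitmx ->
  invmx (M *m N) = invmx N *m invmx M.
Proof.
move=> uM uN; apply: invmx_uniq.
by rewrite mulmxA mulmxK // mulmxV.
Qed.

Definition mxconj M S := M *m S *m invmx M.

Lemma mxconj1mx S : mxconj 1%:M S = S.
Proof. by rewrite /mxconj invmx1 mul1mx mulmx1. Qed.

Lemma mxconjmx1 M : M \in unitmx -> mxconj M 1%:M = 1%:M.
Proof. by move=> uM; rewrite /mxconj mulmx1 mulmxV. Qed.

Lemma mxconjM M S N : M \in unitmx ->
  mxconj M (S *m N) = mxconj M S *m mxconj M N.
Proof. by move=> uM; rewrite /mxconj !mulmxA mulmxKV. Qed.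

Lemma mxconjV M S : M \in unitmx -> mxconj M (invmx S) = invmx (mxconj M S).
Proof.
move=> uM; have [uS|nuS] := boolP (S \in unitmx).
  by rewrite /mxconj !invmxM ?unitmx_mul ?unitmx_inv ?uM ?uS // invmxK mulmxA.
rewrite [invmx S]invmx_out // [invmx (mxconj M S)]invmx_out //.
by rewrite inE /mxconj !unitmx_mul unitmx_inv uM andbT.
Qed.

Lemma mxconj_comp M N S : M \in unitmx -> N \in unitmx ->
  mxconj (M *m N) S = mxconj M (mxconj N S).
Proof. by move=> uM uN; rewrite /mxconj invmxM // !mulmxA. Qed.

Lemma mxconjK M S : M \in unitmx -> mxconj (invmx M) (mxconj M S) = S.
Proof.
move=> uM; rewrite -mxconj_comp ?unitmx_inv // mulVmx //.
exact: mxconj1mx.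
Qed.

Lemma mxconjKV M S : M \in unitmx -> mxconj M (mxconj (invmx M) S) = S.
Proof. by move=> uM; rewrite -{1}[M]invmxK mxconjK ?unitmx_inv. Qed.

Lemma gen_group_mxconj X M S :
  gen_group X M -> gen_group X S -> gen_group X (mxconj M S).
Proof. by move=> GM GS; apply: gg_mul; [apply: gg_mul | apply: gg_inv]. Qed.

Lemma gen_group_mxconj_gen X Y M : M \in unitmx ->
  (forall S, X S -> gen_group Y (mxconj M S)) ->
  forall S, gen_group X S -> gen_group Y (mxconj M S).
Proof.
move=> uM XY S; elim=> [|S0 /XY //|S1 S2 _ G1 _ G2|S1 _ G1].
- by rewrite mxconjmx1 //; apply: gg_one.
- by rewrite mxconjM //; apply: gg_mul.
- by rewrite mxconjV //; apply: gg_inv.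
Qed.

Definition conj_iso X Y M := [/\ M \in unitmx,
  forall S, gen_group X S -> gen_group Y (mxconj M S) &
  forall S, gen_group Y S -> gen_group X (mxconj (invmx M) S)].

Lemma conj_iso_gen X Y M : M \in unitmx ->
  (forall S, X S -> gen_group Y (mxconj M S)) ->
  (forall S, Y S -> gen_group X (mxconj (invmx M) S)) -> conj_iso X Y M.
Proof.
by move=> uM XY YX; split=> //; apply: gen_group_mxconj_gen; rewrite ?unitmx_inv.
Qed.

Lemma conj_iso_refl X : conj_iso X X 1%:M.
Proof. by split=> [|S|S]; rewrite ?unitmx1 ?invmx1 ?mxconj1mx. Qed.

Lemma conj_iso_sym X Y M : conj_iso X Y M -> conj_iso Y X (invmx M).
Proof. by case=> uM XY YX; split; rewrite ?unitmx_inv ?invmxK. Qed.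

Lemma conj_iso_trans X Y Z M N :
  conj_iso X Y M -> conj_iso Y Z N -> conj_iso X Z (N *m M).
Proof.
case=> uM XY YX [uN YZ ZY]; split=> [|S GS|S GS]; first by rewrite unitmx_mul uN.
  by rewrite mxconj_comp //; apply/YZ/XY.
by rewrite invmxM // mxconj_comp ?unitmx_inv //; apply/YX/ZY.
Qed.

Lemma conj_isoP X Y M : conj_iso X Y M ->
  (forall S, gen_group X S -> gen_group Y (M *m S *m invmx M)) /\
  (forall S', gen_group Y S' -> exists2 S, gen_group X S & S' = M *m S *m invmx M).
Proof.
case=> uM XY YX; split=> [//|S' GS']; exists (mxconj (invmx M) S'); first exact: YX.
by rewrite -[RHS]/(mxconj M _) mxconjKV.
Qed.

End Conjugation.

Definition transvection_pow n (Om : 'M[int]_n) (c : int) (v : 'rV[int]_n) :=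
  1%:M + c *: (Om^T *m v^T *m v).

Lemma mxconj_transvection_pow n (Om Om' B : 'M[int]_n) c v :
  B \in unitmx -> B *m Om *m B^T = Om' ->
  mxconj B (transvection_pow Om c v) = transvection_pow Om' c (v *m invmx B).
Proof.
move=> uB <-; rewrite /mxconj /transvection_pow mulmxDr mulmx1 mulmxDl mulmxV //.
rewrite -scalemxAr -scalemxAl !trmx_mul trmxK trmx_inv !mulmxA.
by rewrite -(mulmxA _ B^T) mulmxV ?unitmx_tr // mulmx1.
Qed.

Section Transvection.
Variables (n : nat) (Om : 'M[int]_n).
Hypothesis Om_skew : Om^T = - Om.
Implicit Types (c d : int) (v : 'rV[int]_n).
Local Notation T := (transvection_pow Om).
Local Notation e i := (delta_mx 0 i : 'rV[int]_n).

Lemma skew_form_self v : v *m Om *m v^T = 0.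
Proof.
set x := v *m Om *m v^T.
have xN : x^T = - x by rewrite /x !trmx_mul trmxK Om_skew mulNmx mulmxN mulmxA.
apply/matrixP => i j; rewrite !ord1 mxE.
have /eqP := congr1 (fun M : 'M_1 => M 0 0) xN.
by rewrite !mxE -addr_eq0 -mulr2n mulrn_eq0 => /eqP.
Qed.

Lemma transvection_powD c d v : T c v *m T d v = T (c + d) v.
Proof.
have NN : (Om^T *m v^T *m v) *m (Om^T *m v^T *m v) = 0.
  have -> : (Om^T *m v^T *m v) *m (Om^T *m v^T *m v)
           = Om^T *m v^T *m (v *m Om^T *m v^T) *m v by rewrite !mulmxA.
  have -> : v *m Om^T *m v^T = (v *m Om *m v^T)^T by rewrite !trmx_mul trmxK mulmxA.
  by rewrite skew_form_self trmx0 mulmx0 mul0mx.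
rewrite /T /transvection_pow mulmxDl mul1mx !mulmxDr mulmx1.
by rewrite -scalemxAl -scalemxAr NN !scaler0 addr0 scalerDl addrA addrAC.
Qed.

Lemma transvection_pow0 v : T 0 v = 1%:M.
Proof. by rewrite /T /transvection_pow scale0r addr0. Qed.

Lemma transvection_pow1 v : T 1 v = transvection Om v.
Proof. by rewrite /T /transvection_pow scale1r. Qed.

Lemma transvection_powK c v : T c v *m T (- c) v = 1%:M.
Proof. by rewrite transvection_powD subrr transvection_pow0. Qed.

Lemma transvection_pow_unit c v : T c v \in unitmx.
Proof. by case: (mulmx1_unit (transvection_powK c v)). Qed.

Lemma invmx_transvection_pow c v : invmx (T c v) = T (- c) v.
Proof. exact: invmx_uniq (transvection_powK c v). Qed.

Lemma transvection_pow_sympl c v : T c v *m Om *m (T c v)^T = Om.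
Proof.
rewrite /T /transvection_pow linearD linearZ /= trmx1 !trmx_mul !trmxK.
rewrite mulmxDl mul1mx !mulmxDr mulmx1 mulmxDl -!scalemxAl -!scalemxAr.
have -> : Om^T *m v^T *m v *m Om *m (v^T *m (v *m Om))
        = Om^T *m v^T *m (v *m Om *m v^T) *m (v *m Om) by rewrite !mulmxA.
rewrite skew_form_self mulmx0 mul0mx !scaler0 addr0.
by rewrite Om_skew !mulNmx !mulmxA scalerN addrNK.
Qed.

Lemma row_transvection_pow c (i j : 'I_n) :
  e i *m T c (e j) = e i + (c * Om j i) *: e j.
Proof.
rewrite /T /transvection_pow mulmxDr mulmx1 -scalemxAr !mulmxA trmx_delta.
have -> : e i *m Om^T *m delta_mx j 0 = (Om j i)%:M.
  by rewrite -rowE -colE; apply/matrixP => ? ?; rewrite !ord1 !mxE eqxx mulr1n.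
by rewrite mul_scalar_mx scalerA.
Qed.

Lemma gen_group_transvection_pow (X : 'M[int]_n -> Prop) c v :
  X (transvection Om v) -> gen_group X (T c v).
Proof.
move=> Xv; have GT m : gen_group X (T m%:Z v).
  elim: m => [|m IHm]; first by rewrite transvection_pow0; apply: gg_one.
  rewrite -addn1 PoszD -transvection_powD; apply: gg_mul => //.
  by rewrite transvection_pow1; apply: gg_gen.
case: c => m //; rewrite NegzE -[T _ v]invmx_transvection_pow.
exact/gg_inv/GT.
Qed.

End Transvection.

Section Before.
Local Open Scope nat_scope.
Variable T : eqType.
Implicit Types (r s : seq T) (a b x w : T).

Definition before s a b := index a s < index b s.

Lemma index_rcons_old r x a : a \in r -> index a (rcons r x) = index a r.
Proof. by move=> ar; rewrite -cats1 index_cat ar. Qed.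

Lemma index_rcons_new r x : x \notin r -> index x (rcons r x) = size r.
Proof. by move=> xr; rewrite -cats1 index_pivot. Qed.

Lemma before_rcons r x a b : a \in r -> b \in r -> before (rcons r x) a b = before r a b.
Proof. by move=> ar br; rewrite /before !index_rcons_old. Qed.

Lemma before_rcons_new r x a : x \notin r -> a \in r -> before (rcons r x) a x.
Proof. by move=> xr ar; rewrite /before index_rcons_new // index_rcons_old // index_mem. Qed.

Lemma before_new_rcons r x b : x \notin r -> b \in rcons r x -> before (rcons r x) x b = false.
Proof.
move=> xr; rewrite mem_rcons in_cons => /predU1P [->|br]; first by rewrite /before ltnn.
by rewrite /before index_rcons_new // index_rcons_old // ltnNge ltnW // index_mem.
Qed.

Lemma before_total s a b : a \in s -> a != b -> before s a b || before s b a.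
Proof.
move=> sa nab; rewrite /before -neq_ltn; apply: contra nab => /eqP eab.
by rewrite -(nth_index a sa) eab nth_index // -index_mem -eab index_mem.
Qed.

Section InsertAfter.
Variables (r : seq T) (x w : T).
Hypotheses (xr : x \notin r) (wr : w \in r).
Let k := (index w r).+1.
Let s' := take k r ++ x :: drop k r.

Lemma mem_insert_after a : (a \in s') = (a == x) || (a \in r).
Proof. by rewrite mem_cat in_cons orbCA -mem_cat cat_take_drop. Qed.

Lemma index_insert_after_new : index x s' = k.
Proof.
rewrite index_pivot; last exact: contra (@mem_take _ _ _ _) xr.
by rewrite size_takel // index_mem.
Qed.

Lemma index_insert_after_old a : a \in r ->
  index a s' = index a r + (index w r < index a r).
Proof.
move=> ar; have xa : (x == a) = false by apply/negbTE; apply: contraNneq xr => ->.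
have kr : k <= size r by rewrite index_mem.
have ira : index a r = index a (take k r ++ drop k r) by rewrite cat_take_drop.
rewrite /s' index_cat in_take //; case: ltnP => [lt_ak|le_ka].
  have -> : index a (take k r) = index a r by rewrite ira index_cat in_take // lt_ak.
  by rewrite addn0.
rewrite /= xa size_takel // addn1 ira index_cat in_take // ltnNge le_ka /=.
by rewrite size_takel // addnS.
Qed.

Lemma before_insert_after a b : a \in r -> b \in r -> before s' a b = before r a b.
Proof.
by move=> ar br; rewrite /before !index_insert_after_old //; lia.
Qed.

Lemma before_insert_after_new b : b \in r -> before s' x b = before r w b.
Proof.
by move=> br; rewrite /before index_insert_after_new index_insert_after_old //; lia.
Qed.

Lemma before_insert_after_old_new a : a \in r -> before s' a x = ~~ before r w a.
Proof.
by move=> ar; rewrite /before index_insert_after_new index_insert_after_old //; lia.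
Qed.

End InsertAfter.
End Before.

Section ElementaryConjugation.
Variable A : finType.
Local Notation n := #|A|.
Implicit Types (Om : 'M[int]_n) (a l w : A) (c : int).

Definition transvections Om (S : 'M[int]_n) := exists a, S = transvection Om (evec a).

Lemma evec_Emx a l w : evec a *m Emx l w = (a == l)%:R *: evec w.
Proof.
rewrite /evec /Emx mul_delta_mx_cond (inj_eq enum_rank_inj).
by case: eqP; rewrite ?scale1r ?scale0r.
Qed.

Lemma elementary_mulmxV l w c : l != w ->
  (1%:M + c *: Emx l w) *m (1%:M - c *: Emx l w) = 1%:M.
Proof.
move=> nlw; rewrite mulmxDl mul1mx mulmxBr mulmx1 -scalemxAl -scalemxAr.
rewrite /Emx mul_delta_mx_0 ?(inj_eq enum_rank_inj) 1?eq_sym //.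
by rewrite !scaler0 subr0 subrK.
Qed.

Lemma gen_group_elementary_conj Om Om' l w c : Om'^T = - Om' -> l != w ->
    Om' (enum_rank w) (enum_rank l) \is a GRing.unit ->
    (1%:M + c *: Emx l w) *m Om *m (1%:M + c *: Emx l w)^T = Om' ->
  forall S, transvections Om S ->
    gen_group (transvections Om') (mxconj (1%:M + c *: Emx l w) S).
Proof.
move=> skew' nlw unit_wl hB _ [a ->].
have BV := elementary_mulmxV c nlw; have [uB _] := mulmx1_unit BV.
rewrite -transvection_pow1 (mxconj_transvection_pow _ _ uB hB) (invmx_uniq BV).
rewrite mulmxBr mulmx1 -scalemxAr evec_Emx scalerA mulr_natr.
have [->|nal] := eqVneq a l; last first.
  by rewrite mulr0n scale0r subr0 transvection_pow1; apply: gg_gen; exists a.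
(* [e_l - c e_w] is the image of [e_l] under a power of [T'_{e_w}] since <e_w, e_l>' is a unit *)
set k := - c / Om' (enum_rank w) (enum_rank l).
have -> : evec l - (c *+ true) *: evec w = evec l *m transvection_pow Om' k (evec w).
  by rewrite row_transvection_pow mulrVK // scaleNr.
have uT := transvection_pow_unit skew' (- k) (evec w).
have symT := transvection_pow_sympl skew' (- k) (evec w).
rewrite -[k]opprK -invmx_transvection_pow //.
move: (mxconj_transvection_pow 1 (evec l) uT symT) => <-.
apply: gen_group_mxconj; first by apply: gen_group_transvection_pow => //; exists w.
by rewrite transvection_pow1; apply: gg_gen; exists l.
Qed.

Definition elementary_step Om Om' (B : 'M[int]_n) := exists l w, [/\ l != w,
  B = 1%:M + Emx l w, B *m Om *m B^T = Om',
  Om (enum_rank w) (enum_rank l) \is a GRing.unit &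
  Om' (enum_rank w) (enum_rank l) \is a GRing.unit].

Lemma elementary_stepN Om Om' B :
  elementary_step Om Om' B -> elementary_step (- Om) (- Om') B.
Proof.
case=> l [w [nlw -> hB unit_wl unit_wl']]; exists l, w.
by split; rewrite ?mulmxN ?mulNmx ?hB ?mxE ?unitrN.
Qed.

Lemma conj_iso_elementary Om Om' B : Om^T = - Om -> Om'^T = - Om' ->
  elementary_step Om Om' B -> conj_iso (transvections Om) (transvections Om') B.
Proof.
move=> skew skew' [l [w [nlw -> hB unit_wl unit_wl']]].
rewrite -[Emx l w]scale1r in hB *.
have BV := elementary_mulmxV 1 nlw; have [uB _] := mulmx1_unit BV.
apply: conj_iso_gen => //; first exact: gen_group_elementary_conj.
rewrite (invmx_uniq BV) -scaleNr; apply: gen_group_elementary_conj => //.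
rewrite -hB scaleNr !mulmxA (mulmx1C BV) mul1mx -mulmxA -trmx_mul (mulmx1C BV).
by rewrite trmx1 mulmx1.
Qed.

End ElementaryConjugation.

Section DeltaEntries.
Variables (R : pzSemiRingType) (n : nat).
Implicit Types (M : 'M[R]_n) (l w i j : 'I_n).

Lemma mul_delta_mxE M (i0 j0 : 'I_n) i j : (delta_mx i0 j0 *m M) i j = (i == i0)%:R * M j0 j.
Proof.
rewrite mxE (bigD1 j0) //= big1 ?addr0 => [|k /negbTE nk]; rewrite mxE ?eqxx ?nk //.
  by rewrite andbT.
by rewrite andbF mul0r.
Qed.

Lemma mulmx_deltaE M (i0 j0 : 'I_n) i j : (M *m delta_mx i0 j0) i j = M i i0 * (j == j0)%:R.
Proof.
rewrite mxE (bigD1 i0) //= big1 ?addr0 => [|k /negbTE nk]; rewrite mxE ?eqxx ?nk //=.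
by rewrite mulr0.
Qed.

Lemma elementary_conjE M l w i j :
  ((1%:M + delta_mx l w) *m M *m (1%:M + delta_mx l w)^T) i j =
  M i j + (i == l)%:R * M w j + M i w * (j == l)%:R
        + (i == l)%:R * M w w * (j == l)%:R.
Proof.
rewrite linearD /= trmx1 trmx_delta mulmxDl mul1mx !mulmxDr !mulmx1 mulmxDl.
have addE (A B : 'M[R]_n) : (A + B) i j = A i j + B i j by rewrite mxE.
by rewrite !addE !mul_delta_mxE !mulmx_deltaE mul_delta_mxE !addrA.
Qed.

End DeltaEntries.

Section RauzyStep.
Variable A : finType.
Local Notation n := #|A|.
Implicit Types (p : perm_pair A) (a b l w : A).

Lemma Omega_tr p : (Omega p)^T = - Omega p.
Proof.
by apply/matrixP => i j; rewrite !mxE /=; do ![case: ltngtP => _ /=]; rewrite ?oppr0 ?opprK.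
Qed.

Lemma Omega_swap p : Omega (p.2, p.1) = - Omega p.
Proof.
by apply/matrixP => i j; rewrite !mxE /=; do ![case: ltngtP => _ /=]; rewrite ?oppr0 ?opprK.
Qed.

Lemma Omega_before p a b : (forall x, x \in p.1) -> (forall x, x \in p.2) ->
  Omega p (enum_rank a) (enum_rank b) = (before p.1 a b)%:R - (before p.2 a b)%:R.
Proof.
move=> in1 in2; rewrite mxE /= !enum_rankK /pos !ltnS.
have [->|nab] := eqVneq a b; first by rewrite /before !ltnn subrr.
move: (before_total (in1 a) nab) (before_total (in2 a) nab); rewrite /before.
by do ![case: ltngtP => _ //=].
Qed.

Lemma rauzy_row_rcons (t0 b0 : seq A) w l :
  rauzy_row (rcons t0 w) (rcons b0 l) =
  take (pos (rcons b0 l) w) b0 ++ l :: drop (pos (rcons b0 l) w) b0.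
Proof.
by case: t0 => [|x t0]; case: b0 => [|y b0]; rewrite /rauzy_row /= ?last_rcons ?belast_rcons.
Qed.

Lemma winner_loser_rcons (t0 b0 : seq A) w l :
  winner_loser Top (rcons t0 w, rcons b0 l) = Some (w, l).
Proof. by case: t0 => [|x t0]; case: b0 => [|y b0]; rewrite /winner_loser /= ?last_rcons. Qed.

Section TopStep.
Variables (t0 b0 : seq A) (w l : A).
Hypotheses (valid_p : valid (rcons t0 w, rcons b0 l)) (nlw : l != w).

Let in_top x : x \in rcons t0 w.
Proof. by case/andP: valid_p => /perm_mem -> _; rewrite mem_enum. Qed.

Let in_bot x : x \in rcons b0 l.
Proof. by case/andP: valid_p => _ /perm_mem ->; rewrite mem_enum. Qed.

Let w_t0 : w \notin t0.
Proof. by case/andP: valid_p => /perm_uniq; rewrite enum_uniq rcons_uniq => /andP[]. Qed.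

Let l_b0 : l \notin b0.
Proof. by case/andP: valid_p => _ /perm_uniq; rewrite enum_uniq rcons_uniq => /andP[]. Qed.

Let w_b0 : w \in b0.
Proof. by have := in_bot w; rewrite mem_rcons in_cons eq_sym (negbTE nlw). Qed.

Let in_b0 x : x != l -> x \in b0.
Proof. by have := in_bot x; rewrite mem_rcons in_cons => /predU1P[->|]; rewrite ?eqxx. Qed.

Let in_t0 x : x != w -> x \in t0.
Proof. by have := in_top x; rewrite mem_rcons in_cons => /predU1P[->|]; rewrite ?eqxx. Qed.

Lemma rauzy_top_rcons : rauzy Top (rcons t0 w, rcons b0 l) =
  (rcons t0 w, take (index w b0).+1 b0 ++ l :: drop (index w b0).+1 b0).
Proof. by rewrite /= rauzy_row_rcons /pos index_rcons_old. Qed.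

Let in_top' x : x \in take (index w b0).+1 b0 ++ l :: drop (index w b0).+1 b0.
Proof. by rewrite mem_insert_after //; case: eqVneq => // /in_b0. Qed.

Lemma Omega_rauzy_top :
  (1%:M + Emx l w) *m Omega (rcons t0 w, rcons b0 l) *m (1%:M + Emx l w)^T
  = Omega (rauzy Top (rcons t0 w, rcons b0 l)).
Proof.
rewrite rauzy_top_rcons; apply/matrixP => i j.
rewrite -[i]enum_valK -[j]enum_valK; move: (enum_val i) (enum_val j) => a b.
rewrite elementary_conjE !(inj_eq enum_rank_inj) !Omega_before //=.
have irr s x : before s x x = false by rewrite /before ltnn.
have Tw y : before (rcons t0 w) w y = false by exact: before_new_rcons.
have Bl y : before (rcons b0 l) l y = false by exact: before_new_rcons.
have [->|nal] := eqVneq a l; have [->|nbl] := eqVneq b l; rewrite !irr !Tw ?Bl.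
- by rewrite (before_rcons_new l_b0 w_b0) (before_rcons_new w_t0) ?in_t0 //; lia.
- rewrite (before_rcons l w_b0 (in_b0 nbl)).
  by rewrite (before_insert_after_new l_b0 w_b0 (in_b0 nbl)); lia.
- rewrite (before_rcons_new l_b0 (in_b0 nal)).
  rewrite (before_insert_after_old_new l_b0 w_b0 (in_b0 nal)).
  have [->|naw] := eqVneq a w; first by rewrite !irr; lia.
  rewrite (before_rcons_new w_t0 (in_t0 naw)) (before_rcons l (in_b0 nal) w_b0).
  by move: (before_total (in_b0 nal) naw); rewrite /before; lia.
- rewrite (before_rcons l (in_b0 nal) (in_b0 nbl)).
  by rewrite (before_insert_after l_b0 w_b0 (in_b0 nal) (in_b0 nbl)); lia.
Qed.

Lemma Omega_winner_loser : Omega (rcons t0 w, rcons b0 l) (enum_rank w) (enum_rank l) = -1.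
Proof. by rewrite Omega_before //= before_new_rcons // before_rcons_new. Qed.

Lemma Omega_rauzy_top_winner_loser :
  Omega (rauzy Top (rcons t0 w, rcons b0 l)) (enum_rank w) (enum_rank l) = -1.
Proof.
rewrite rauzy_top_rcons Omega_before //= before_new_rcons //.
by rewrite before_insert_after_old_new // /before ltnn.
Qed.

End TopStep.

Lemma rirreducible_rcons_neq (t0 b0 : seq A) w l : (1 < n)%N ->
  valid (rcons t0 w, rcons b0 l) -> rirreducible (rcons t0 w, rcons b0 l) -> l != w.
Proof.
move=> n2 /andP[/= pt pb] irr; apply/eqP => elw; subst l.
have size_pre s : perm_eq (rcons s w) (enum A) -> size s = n.-1.
  by move/perm_size; rewrite size_rcons -cardE => <-.
have lt_n : (n.-1 < n)%N by rewrite prednK ?(ltnW n2).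
move/forallP: irr => /(_ (Ordinal lt_n)) /=; rewrite -ltnS prednK ?(ltnW n2) // n2 /=.
rewrite -!cats1 !take_size_cat ?(size_pre _ pt) ?(size_pre _ pb) // => /negP; apply.
by rewrite -(perm_cat2r [:: w]) !cats1 (perm_trans pt) // perm_sym.
Qed.

Lemma elementary_step_rauzy_top p : (1 < n)%N -> rvertex p ->
  elementary_step (Omega p) (Omega (rauzy Top p)) (Bmx Top p).
Proof.
case: p => t b n2 /andP[vp irr].
have size_row s : perm_eq s (enum A) -> size s = n by move/perm_size; rewrite -cardE.
case/lastP: t vp irr => [|t0 w] vp irr.
  by case/andP: vp => /size_row/= n0 _; rewrite -n0 in n2.
case/lastP: b vp irr => [|b0 l] vp irr.
  by case/andP: vp => _ /size_row/= n0; rewrite -n0 in n2.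
have nlw := rirreducible_rcons_neq n2 vp irr.
exists l, w; split=> //; rewrite ?Omega_winner_loser ?Omega_rauzy_top_winner_loser ?unitrN1 //.
  by rewrite /Bmx winner_loser_rcons.
by rewrite /Bmx winner_loser_rcons Omega_rauzy_top.
Qed.

Lemma Bmx_bot p : Bmx Bot p = Bmx Top (p.2, p.1).
Proof. by case: p => [[|x xs] [|y ys]]. Qed.

Lemma rauzy_bot p : rauzy Bot p = ((rauzy Top (p.2, p.1)).2, (rauzy Top (p.2, p.1)).1).
Proof. by case: p. Qed.

Lemma rvertex_swap p : rvertex p -> rvertex (p.2, p.1).
Proof.
case/andP=> /andP[v1 v2] /forallP irr; apply/andP; split; first exact/andP.
by apply/forallP => k; rewrite perm_sym; apply: irr.
Qed.

Lemma elementary_step_rauzy k p : (1 < n)%N -> rvertex p ->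
  elementary_step (Omega p) (Omega (rauzy k p)) (Bmx k p).
Proof.
move=> n2 vp; case: k; first exact: elementary_step_rauzy_top.
rewrite Bmx_bot rauzy_bot Omega_swap -[Omega p]opprK -(Omega_swap p).
exact/elementary_stepN/elementary_step_rauzy_top/rvertex_swap.
Qed.

Lemma conj_iso_rauzy k p : (1 < n)%N -> rvertex p ->
  conj_iso (transvections (Omega p)) (transvections (Omega (rauzy k p))) (Bmx k p).
Proof.
by move=> n2 vp; apply/conj_iso_elementary/elementary_step_rauzy; rewrite ?Omega_tr.
Qed.

Lemma conj_iso_walk p q B : (1 < n)%N -> walk p q B ->
  conj_iso (transvections (Omega p)) (transvections (Omega q)) B.
Proof.
move=> n2; elim=> [p0 | k p0 q0 M vp _ _ IH | k p0 q0 M vp _ _ IH].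
- exact: conj_iso_refl.
- exact: conj_iso_trans (conj_iso_rauzy k n2 vp) IH.
- exact: conj_iso_trans (conj_iso_sym (conj_iso_rauzy k n2 vp)) IH.
Qed.

End RauzyStep.

Theorem lemma2p7 (A : finType) (p p' : perm_pair A) (B : 'M[int]_#|A|) :
  (3 <= #|A|)%N ->
  rvertex p -> rnondegenerate p -> rvertex p' -> rnondegenerate p' ->
  walk p p' B ->
  (forall S, Gtrans p S -> Gtrans p' (B *m S *m invmx B)) /\
  (forall S', Gtrans p' S' -> exists2 S, Gtrans p S & S' = B *m S *m invmx B).
Proof.
move=> d3 _ _ _ _ hw.
exact/conj_isoP/(conj_iso_walk (ltnW d3) hw).
Qed.
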